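(* In the setting below, as $\mathcal{O}$-modules $\operatorname{coker}(\lambda_P(\mathbf{J}))\cong\mathcal{O}^{mn-(n-t)}\oplus T$, where $T$ is the torsion submodule, and $\operatorname{length}_{\mathcal{O}}T = (n-t)\,w_{\mathbf{a}}$.
   Context: Let $\mathcal{O}$ be a discrete valuation ring with uniformiser $\varpi$ and normalised valuation $\nu$. Let $2\le m\le n$, $t=m-1$, $P=\mathcal{O}[X_{m\times n}]$, $X_{[a,b]}$ the submatrix of columns $a$ through $b$ of the $m\times n$ matrix of indeterminates $X$, and $f_k=\det X_{[k,k+t]}$ for $1\le k\le n-t$. $\mathbf{J}$ is the $mn\times(n-t)$ Jacobian matrix with entries $\partial f_k/\partial X_{ij}$ (rows indexed by variables). Fix integers $0\le a_1\le\cdots\le a_t$, $D=\operatorname{diag}(\varpi^{a_1},\ldots,\varpi^{a_t})$, $\Delta=\det D$. Let $\mathbf{a}\in\mathcal{O}^{m\times n}$ have zero last row and top $t$ entries of column $j$ equal to the $r$-th column of $D$, where $1\le r\le t$, $r\equiv j\pmod t$. $\lambda_P\colon P\to\mathcal{O}$ is $X_{ij}\mapsto\mathbf{a}_{ij}$, and $\lambda_P(\mathbf{J})\colon\mathcal{O}^{n-t}\to\mathcal{O}^{mn}$ is the entrywise evaluated matrix. $w_{\mathbf{a}} = \nu(\Delta) = \operatorname{length}_{\mathcal{O}}(\mathcal{O}/\mathrm{I}_t(\mathbf{a}))$. *)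

From HB Require Import structures.
From mathcomp Require Import all_boot all_order all_algebra.
From mathcomp Require Import mpoly.
Set Implicit Arguments. Unset Strict Implicit. Unset Printing Implicit Defensive.
Import Order.TTheory GRing.Theory.
Local Open Scope ring_scope.

(* O is a discrete valuation ring with uniformiser pi and normalised
   valuation nu : every nonzero x is (unit) * pi^(nu x), pi is a nonzero
   non-unit.  (nu 0 is irrelevant; it is never used below at 0.) *)
Definition is_DVR (O : idomainType) (pi : O) (nu : O -> nat) : Prop :=
  [/\ pi != 0, pi \isn't a GRing.unit &
      forall x : O, x != 0 ->
        exists2 u : O, u \is a GRing.unit & x = u * pi ^+ nu x].

(* Variables of P = O[X_{m x n}] : X_{ij} (0-indexed) is 'X_(i*n+j). *)
Definition xvar (O : comNzRingType) (m n : nat) (i j : nat) : {mpoly O[m * n]} :=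
  if (insub (i * n + j) : option 'I_(m * n)) is Some v then 'X_v else 0.

(* f_k = det X_[k, k+t] (0-indexed k < n - t, t = m - 1): the m x m minor
   on the consecutive columns k, ..., k + m - 1. *)
Definition fmin (O : comNzRingType) (m n : nat) (k : nat) : {mpoly O[m * n]} :=
  \det (\matrix_(i < m, c < m) xvar O m n i (k + c)).

Definition jacobian (O : comNzRingType) (m n : nat) :
    'M[{mpoly O[m * n]}]_(m * n, n - (m - 1)) :=
  \matrix_(v < m * n, k < n - (m - 1)) mderiv v (fmin O m n k).

(* The point a (0-indexed entries): the last row is zero and the top t
   entries of column j are the r-th column of D = diag(pi^(e 0),...,pi^(e (t-1))),
   where r = j mod t; i.e. a_{ij} = pi^(e i) if i = j mod t (< t), else 0. *)
Definition apt (O : comNzRingType) (m n : nat) (pi : O) (e : nat -> nat)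
    (i j : nat) : O :=
  if (i < m - 1)%N && (i == j %% (m - 1))%N then pi ^+ e i else 0.

Definition lampt (O : comNzRingType) (m n : nat) (pi : O) (e : nat -> nat) :
    'I_(m * n) -> O :=
  fun v => @apt O m n pi e (v %/ n)%N (v %% n)%N.

Definition evJ (O : comNzRingType) (m n : nat) (pi : O) (e : nat -> nat) :
    'M[O]_(m * n, n - (m - 1)) :=
  map_mx (meval (@lampt O m n pi e)) (jacobian O m n).

(* Isomorphism of O-modules coker A ~= coker B, A : O^q -> O^p, B : O^q' -> O^p'
   (cokernels of matrices acting on column vectors).  Any O-linear map between
   finitely presented cokernels lifts to a matrix between the free covers, so
   this is exactly: there are mutually inverse O-linear maps of the cokernels. *)
Definition coker_iso (R : comNzRingType) (p q p' q' : nat)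
    (A : 'M[R]_(p, q)) (B : 'M[R]_(p', q')) : Prop :=
  exists (F : 'M[R]_(p', p)) (G : 'M[R]_(p, p')),
    [/\ exists X : 'M[R]_(q', q), F *m A = B *m X,
        exists Y : 'M[R]_(q, q'), G *m B = A *m Y,
        exists Z : 'M[R]_(q, p), G *m F - 1%:M = A *m Z &
        exists W : 'M[R]_(q', p'), F *m G - 1%:M = B *m W].

(* The presentation matrix p x q (q <= p) with diagonal pi^(d k), k < q, zero
   elsewhere: its cokernel is O^(p-q) (+) (+)_{k<q} O/(pi^(d k)), whose torsion
   submodule is T = (+)_{k<q} O/(pi^(d k)), of O-length sum_k d k. *)
Definition free_plus_torsion (R : comNzRingType) (pi : R) (p q : nat)
    (d : 'I_q -> nat) : 'M[R]_(p, q) :=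
  \matrix_(i < p, k < q) if (i == k :> nat) then pi ^+ d k else 0.

From mathcomp Require Import all_boot all_algebra all_fingroup.
From mathcomp Require Import mpoly zify.

(* At the point [a] the last row of [X] vanishes.  By Jacobi's formula,
   [d f_k / d X_(i,k+c)] at [a] is the [(i, c)] cofactor of the evaluated
   block [a_[k, k+t]], hence zero unless [i] is the last row; there it is a
   signed maximal minor of the top [t] rows, which are [pi^(e i)] times 0/1
   rows, so it equals [Delta] times a minor of a 0/1 matrix.  For [c = 0]
   that 0/1 matrix is a permutation matrix.  Thus [lambda_P(J) = Delta * M]
   where column [k] of [M] has a unit in row [t n + k] and zeros above it;
   such an [M] is [U * pid_mx (n - t)] with [U] invertible, and
   [Delta = unit * pi^(nu Delta)] gives the diagonal presentation. *)

Set Implicit Arguments.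
Unset Strict Implicit.
Unset Printing Implicit Defensive.

Import GRing.Theory.
Local Open Scope ring_scope.

Lemma mderivXU (R : comNzRingType) N (v w : 'I_N) :
  mderiv v ('X_w : {mpoly R[N]}) = (w == v)%:R.
Proof.
rewrite mderivX mnm1E; case: eqP => [->|_]; last by rewrite scale0r.
by rewrite -[X in (X - _)%MM]add0m addmK mpolyX0 scale1r.
Qed.

Lemma mderiv_prod (R : comNzRingType) N (v : 'I_N) k
    (F : 'I_k -> {mpoly R[N]}) :
  mderiv v (\prod_(i < k) F i) =
  \sum_(j < k) mderiv v (F j) * \prod_(i < k | i != j) F i.
Proof.
elim: k F => [|k IHk] F; first by rewrite !big_ord0 -mpolyC1 mderivC.
rewrite big_ord_recl mderivM IHk big_ord_recl /=.
rewrite (big_mkcond (fun i => i != ord0)) big_ord_recl eqxx /= mul1r mulr_sumr.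
congr (_ + _); apply eq_bigr => j _.
rewrite (big_mkcond (fun i => i != lift ord0 j)) big_ord_recl /= mulrCA.
congr (_ * (_ * _)); rewrite [LHS]big_mkcond; apply eq_bigr => i _.
by rewrite (inj_eq (@lift_inj _ ord0)).
Qed.

Lemma mderiv_det (R : comNzRingType) N (v : 'I_N) m (X : 'M[{mpoly R[N]}]_m) :
  mderiv v (\det X) = \sum_i \sum_j mderiv v (X i j) * cofactor X i j.
Proof.
rewrite /determinant raddf_sum /=.
under eq_bigr => s _ do
  rewrite -(rmorph_sign (@mpolyC N R)) mderiv_mulC rmorph_sign
          mderiv_prod mulr_sumr.
rewrite exchange_big /=; apply eq_bigr => i _.
rewrite (partition_big (fun s : 'S_m => s i) xpredT) //=; apply eq_bigr => j _.
rewrite expand_cofactor mulr_sumr; apply eq_big => [s|s /eqP <-] //.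
by rewrite mulrCA; congr (_ * (_ * _)); apply: eq_bigl => k; rewrite eq_sym.
Qed.

Lemma cofactor_zero_row (R : comNzRingType) m (B : 'M[R]_m) (r i j : 'I_m) :
  row r B = 0 -> i != r -> cofactor B i j = 0.
Proof.
move=> Br0 ir; case: (unliftP i r) => [r' Er|Er]; last by rewrite Er eqxx in ir.
rewrite /cofactor (expand_det_row _ r') big1 ?mulr0 // => c _.
move/rowP: Br0 => /(_ (lift j c)); rewrite !mxE -Er => ->.
by rewrite mul0r.
Qed.

Fact rot_ord_subproof p r (i : 'I_p) : ((i + r) %% p < p)%N.
Proof. by rewrite ltn_pmod // (leq_ltn_trans _ (ltn_ord i)). Qed.

Definition rot_ord p r (i : 'I_p) : 'I_p := Ordinal (rot_ord_subproof r i).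

Lemma rot_ord_inj p r : injective (@rot_ord p r).
Proof.
move=> i j /(congr1 val) /= /eqP; rewrite eqn_modDr !modn_small // => /eqP.
exact: val_inj.
Qed.

Definition rot_perm p r : 'S_p := perm (@rot_ord_inj p r).

Lemma rot_permE p r i : rot_perm p r i = ((i + r) %% p)%N :> nat.
Proof. by rewrite permE. Qed.

Lemma coker_iso_mulmx (R : comUnitRingType) p q (A B : 'M[R]_(p, q))
    (U : 'M_p) (V : 'M_q) :
  U \in unitmx -> V \in unitmx -> A = U *m B *m V -> coker_iso A B.
Proof.
move=> Uu Vu ->; exists (invmx U), U; split.
- by exists V; rewrite -mulmxA mulKmx.
- by exists (invmx V); rewrite -!mulmxA mulmxV // mulmx1.
- by exists 0; rewrite mulmxV // subrr mulmx0.
- by exists 0; rewrite mulVmx // subrr mulmx0.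
Qed.

Lemma free_plus_torsion_const (R : comNzRingType) (pi : R) p q d :
  @free_plus_torsion R pi p q (fun=> d) = pi ^+ d *: pid_mx q.
Proof.
apply/matrixP => i k; rewrite !mxE.
by case: eqP => [->|_]; rewrite ?ltn_ord ?mulr1 ?mulr0.
Qed.

Section Staircase.

Variables (R : comUnitRingType) (p q s : nat) (f : nat -> nat -> R).
Hypotheses (sq_le_p : (s + q <= p)%N)
  (f_above : forall i k, (i < s + k)%N -> f i k = 0)
  (f_pivot : forall k, (k < q)%N -> f (s + k) k \is a GRing.unit).

Let C : 'M[R]_p := \matrix_(i, j)
  if (s <= j < s + q)%N then f i (j - s) else (i == j)%:R.

Lemma staircase_unitmx : C \in unitmx.
Proof.
have C_trig : is_trig_mx C.
  apply/is_trig_mxP => i j ij; rewrite mxE; case: ifP => [/andP[sj _]|_].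
    by apply: f_above; lia.
  by rewrite -val_eqE /= (ltn_eqF ij).
rewrite unitmxE (det_trig C_trig); apply: unitr_prod => j _; rewrite mxE.
case: ifP => [/andP[sj jsq]|_]; last by rewrite eqxx unitr1.
by rewrite -{1}(subnKC sj) f_pivot ?ltn_subLR.
Qed.

Lemma rot_perm_shift_eq (j : 'I_p) k : (k < q)%N ->
  (rot_perm p (p - s) j == k :> nat) = (j == s + k :> nat)%N.
Proof.
move=> kq; rewrite rot_permE; have jp := ltn_ord j.
case: (ltnP j s) => js.
  by rewrite modn_small; [apply/eqP/eqP; lia | lia].
have -> : (j + (p - s) = (j - s) + p)%N by lia.
by rewrite modnDr modn_small; [apply/eqP/eqP; lia | lia].
Qed.

Lemma staircase_pid_mx :
  exists2 U, U \in unitmx & \matrix_(i < p, k < q) f i k = U *m pid_mx q.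
Proof.
exists (C *m perm_mx (rot_perm p (p - s))).
  by rewrite unitmx_mul staircase_unitmx unitmx_perm.
apply/matrixP => i k; rewrite -mulmxA -row_permE [LHS]mxE [RHS]mxE.
have pidE j :
    row_perm (rot_perm p (p - s)) (pid_mx q) j k = (j == s + k :> nat)%:R.
  by rewrite !mxE -rot_perm_shift_eq //; case: eqP => // ->; rewrite ltn_ord.
have sk_lt_p : (s + k < p)%N by have := ltn_ord k; lia.
rewrite (bigD1 (Ordinal sk_lt_p)) //= big1 ?addr0 => [|j /negPf jsk];
  rewrite pidE.
  by rewrite eqxx mulr1 mxE leq_addr ltn_add2l ltn_ord addKn.
by rewrite -val_eqE /= in jsk; rewrite jsk mulr0.
Qed.

End Staircase.

Definition residue_mx (R : nzRingType) t k : 'M[R]_(t, t.+1) :=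
  \matrix_(i, c) (i == (k + c) %% t :> nat)%N%:R.

Definition reduced_jacobian (R : comNzRingType) t n (v k : nat) : R :=
  \sum_(c < t.+1) (v == t * n + k + c)%N%:R *
    ((-1) ^+ (t + c) * \det (col' c (residue_mx R t k))).

Lemma reduced_jacobian_above (R : comNzRingType) t n v k :
  (v < t * n + k)%N -> reduced_jacobian R t n v k = 0.
Proof.
move=> v_lt; apply: big1 => c _.
rewrite (_ : v == _ = false) ?mul0r //.
by apply/negbTE; rewrite neq_ltn ltn_addr.
Qed.

Lemma residue_mx_col0 (R : nzRingType) t k :
  col' ord0 (residue_mx R t k) = (perm_mx (rot_perm t k.+1))^T.
Proof.
apply/matrixP => i c; rewrite !mxE -val_eqE /= rot_permE eq_sym.
by rewrite /bump leq0n /= addnS addSn addnC.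
Qed.

Lemma reduced_jacobian_pivot (R : comUnitRingType) t n k :
  reduced_jacobian R t n (t * n + k) k \is a GRing.unit.
Proof.
rewrite /reduced_jacobian (bigD1 ord0) //= big1 => [|c c_neq0]; last first.
  suff -> : (t * n + k == t * n + k + c)%N = false by rewrite mul0r.
  by apply/negbTE; move: c_neq0; rewrite -val_eqE /=; lia.
rewrite addn0 eqxx mul1r addr0 residue_mx_col0 det_tr det_perm.
by rewrite unitrM !unitrX ?unitrN1.
Qed.

Lemma xvarE (R : comNzRingType) m n i j (w : 'I_(m * n)) :
  val w = (i * n + j)%N -> xvar R m n i j = 'X_w.
Proof.
(* [xvar] computes the index with the ring operations of [nat]. *)
by move=> wE; rewrite /xvar (_ : (i * n + j)%R = val w) ?valK ?wE.
Qed.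

Lemma lamptE (R : comNzRingType) m n (pi : R) e i j (w : 'I_(m * n)) :
  (j < n)%N -> val w = (i * n + j)%N -> lampt pi e w = apt m n pi e i j.
Proof.
move=> j_lt_n wE; have n_gt0 : (0 < n)%N by apply: leq_ltn_trans j_lt_n.
by rewrite /lampt wE divnMDl // divn_small // addn0 modnMDl modn_small.
Qed.

Section JacobianAtPoint.

Variables (R : comNzRingType) (pi : R) (e : nat -> nat) (t n : nat).

Local Notation m := t.+1.
Local Notation a := (@lampt R m n pi e).

Lemma meval_xvar i j : (i < m)%N -> (j < n)%N ->
  meval a (xvar R m n i j) = apt m n pi e i j.
Proof.
move=> i_lt j_lt; have ij_lt : (i * n + j < m * n)%N by nia.
rewrite (@xvarE _ _ _ _ _ (Ordinal ij_lt)) // mevalXU.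
exact: (@lamptE _ _ _ _ _ i j).
Qed.

Lemma meval_mderiv_xvar (v : 'I_(m * n)) i j : (i < m)%N -> (j < n)%N ->
  meval a (mderiv v (xvar R m n i j)) = (v == i * n + j :> nat)%N%:R.
Proof.
move=> i_lt j_lt; have ij_lt : (i * n + j < m * n)%N by nia.
rewrite (@xvarE _ _ _ _ _ (Ordinal ij_lt)) // mderivXU rmorph_nat.
by rewrite -val_eqE eq_sym.
Qed.

Lemma apt_top (i : 'I_t) j :
  apt m n pi e i j = pi ^+ e i * (i == j %% t :> nat)%N%:R.
Proof.
by rewrite /apt subSS subn0 ltn_ord; case: eqP; rewrite ?mulr1 ?mulr0.
Qed.

Lemma apt_last j : apt m n pi e t j = 0.
Proof. by rewrite /apt subSS subn0 ltnn. Qed.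

Let block k : 'M[R]_m := \matrix_(i, c) apt m n pi e i (k + c).

Local Notation Delta := (\prod_(i < t) pi ^+ e i).

Lemma meval_block k : (k + t < n)%N ->
  map_mx (meval a) (\matrix_(i < m, c < m) xvar R m n i (k + c)) = block k.
Proof.
move=> k_lt; apply/matrixP => i c; rewrite !mxE meval_xvar //.
by have := ltn_ord c; lia.
Qed.

Lemma block_last_row k : row ord_max (block k) = 0.
Proof. by apply/rowP => c; rewrite !mxE apt_last. Qed.

Lemma cofactor_block_last k c : cofactor (block k) ord_max c =
  (-1) ^+ (t + c) * (Delta * \det (col' c (residue_mx R t k))).
Proof.
rewrite /cofactor; congr (_ * _).
have -> : row' ord_max (col' c (block k)) =
    diag_mx (\row_i pi ^+ e i) *m col' c (residue_mx R t k).
  by apply/matrixP => i c'; rewrite mul_diag_mx !mxE lift_max apt_top.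
rewrite det_mulmx det_diag; congr (_ * _).
by apply: eq_bigr => i _; rewrite mxE.
Qed.

Lemma evJ_cofactor_expansion v (k : 'I_(n - (m - 1))) :
  evJ m n pi e v k =
  \sum_(i < m) \sum_(c < m)
    (v == i * n + (k + c) :> nat)%N%:R * cofactor (block k) i c.
Proof.
have k_lt : (k + t < n)%N by have := ltn_ord k; lia.
rewrite /evJ /jacobian !mxE /fmin mderiv_det rmorph_sum; apply: eq_bigr => i _.
rewrite rmorph_sum; apply: eq_bigr => c _.
rewrite rmorphM -cofactor_map_mx meval_block // mxE; congr (_ * _).
by apply: meval_mderiv_xvar => //; have := ltn_ord c; lia.
Qed.

Lemma evJ_reduced : evJ m n pi e =
  Delta *: \matrix_(v < m * n, k < n - (m - 1)) reduced_jacobian R t n v k.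
Proof.
apply/matrixP => v k; rewrite evJ_cofactor_expansion !mxE (bigD1 ord_max) //=.
rewrite [X in _ + X]big1 ?addr0 => [|i i_neq]; last first.
  by apply big1 => c _; rewrite (cofactor_zero_row _ (block_last_row k)) ?mulr0.
rewrite /reduced_jacobian mulr_sumr; apply: eq_bigr => c _.
by rewrite cofactor_block_last addnA !(mulrCA _ Delta).
Qed.

End JacobianAtPoint.

Theorem corollary5p7 (O : idomainType) (pi : O) (nu : O -> nat)
    (m n : nat) (e : nat -> nat) :
  is_DVR pi nu ->
  (2 <= m)%N -> (m <= n)%N ->
  (forall i j : nat, (i <= j)%N -> (j < m - 1)%N -> (e i <= e j)%N) ->
  exists d : 'I_(n - (m - 1))%N -> nat,
    coker_iso (@evJ O m n pi e)
      (@free_plus_torsion O pi (m * n)%N (n - (m - 1))%N d) /\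
    (\sum_(k < (n - (m - 1))%N) d k)%N
      = ((n - (m - 1))%N * nu (\prod_(i < (m - 1)%N) pi ^+ e i)%R)%N.
Proof.
case: m => [//|t] [pi_neq0 _ nuP] _ _ _.
have -> : \prod_(i < (t.+1 - 1)%N) pi ^+ e i = \prod_(i < t) pi ^+ e i.
  by rewrite subSS subn0.
set Delta := \prod_(i < t) pi ^+ e i.
have Delta_neq0 : Delta != 0 by apply/prodf_neq0 => i _; rewrite expf_neq0.
have [w w_unit Delta_eq] := nuP Delta Delta_neq0.
exists (fun=> nu Delta); split; last by rewrite sum_nat_const card_ord.
have [|U U_unit reducedE] :=
  @staircase_pid_mx O (t.+1 * n) (n - (t.+1 - 1)) (t * n)
    (reduced_jacobian O t n) _ (@reduced_jacobian_above O t n)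
    (fun k _ => reduced_jacobian_pivot O t n k).
  by rewrite mulSn; lia.
have w_unitmx : (w%:M : 'M_(n - (t.+1 - 1))) \in unitmx.
  by rewrite unitmxE det_scalar unitrX.
apply: (coker_iso_mulmx U_unit w_unitmx).
rewrite evJ_reduced reducedE free_plus_torsion_const mul_mx_scalar -scalemxAr.
by rewrite scalerA -Delta_eq.
Qed.
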